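(* Let $p_1,p_2>2$ be distinct primes and $m_2=p_1^{\beta_1}p_2^{\beta_2}$ with $\beta_1,\beta_2$ positive integers. Let $t=\mathrm{ord}_{m_2}(2)$ and let $\gamma\in\mathbb{F}_{2^t}^*$ be a primitive $m_2$th root of unity. Suppose that $m_2$ is good and that $(u,v)=(p_1^{i_1}p_2^{i_2}\sigma_1,\ p_1^{j_1}p_2^{j_2}\sigma_2)$ is a collision for $m_2$, where $i_1,i_2,j_1,j_2$ are nonnegative integers and $\sigma_1,\sigma_2$ are integers coprime to $m_2$. Let $\omega_1=\min\{i_1,j_1\}$ and $\omega_2=\min\{i_2,j_2\}$. Then $m_1:=m_2/(p_1^{\omega_1}p_2^{\omega_2})$ is good.
   Context: For $m=p_1^{\alpha_1}p_2^{\alpha_2}$ with $p_1,p_2>2$ distinct primes and $\alpha_1,\alpha_2\ge1$: $\mathrm{ord}_m(2)$ is the multiplicative order of $2$ modulo $m$, and with $t=\mathrm{ord}_m(2)$ one fixes a primitive $m$th root of unity $\gamma\in\mathbb{F}_{2^t}^*$. The canonical set of $m$ is $S_m=\{s_{01},s_{10},s_{11}\}\subseteq\mathbb{Z}_m$, where for $\sigma=(\sigma_1,\sigma_2)\in\{0,1\}^2\setminus\{(0,0)\}$, $s_\sigma$ is the unique element of $\mathbb{Z}_m$ with $s_\sigma\equiv\sigma_1 \pmod{p_1^{\alpha_1}}$ and $s_\sigma\equiv \sigma_2\pmod{p_2^{\alpha_2}}$. An $S_m$-decoding polynomial is a polynomial $P(X)\in\mathbb{F}_{2^t}[X]$ such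 that $P(\gamma^s)=0$ for every $s\in S_m$ and $P(1)=1$. The number $m$ is called good if there exists an $S_m$-decoding polynomial with fewer than $4$ monomials (nonzero terms). Let $E=\{e\in\mathbb{Z}: p_1^{\alpha_1}\nmid e,\ p_2^{\alpha_2}\nmid e\}$ and $\rho(z_1,z_2)=(1+z_2^{-1})(1+z_1^{-1})^{-1}$. A pair $(u,v)\in E^2$ is a collision for $m$ if $\rho(\gamma^{s_{10}u},\gamma^{s_{01}u})=\rho(\gamma^{s_{10}v},\gamma^{s_{01}v})$ and $u\not\equiv v\pmod m$. *)

From HB Require Import structures.
From mathcomp Require Import all_boot all_order all_algebra all_field.
Set Implicit Arguments. Unset Strict Implicit. Unset Printing Implicit Defensive.
Import Order.TTheory GRing.Theory Num.Theory.
Local Open Scope ring_scope.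

Definition is_ord2 (m t : nat) : Prop :=
  [/\ (0 < t)%N, (2 ^ t %% m = 1 %% m)%N &
      forall k : nat, (0 < k)%N -> (2 ^ k %% m = 1 %% m)%N -> (t <= k)%N].

Definition q1 (p1 m : nat) : nat := (p1 ^ logn p1 m)%N.
Definition q2 (p2 m : nat) : nat := (p2 ^ logn p2 m)%N.

Definition s_sig (p1 p2 m : nat) (sig1 sig2 : nat) : nat :=
  chinese (q1 p1 m) (q2 p2 m) sig1 sig2.
Definition s01 p1 p2 m := s_sig p1 p2 m 0 1.
Definition s10 p1 p2 m := s_sig p1 p2 m 1 0.
Definition s11 p1 p2 m := s_sig p1 p2 m 1 1.

Definition nmonomials (F : fieldType) (P : {poly F}) : nat :=
  count (fun c => c != 0) P.

Definition decoding_poly (F : fieldType) (gamma : F) (p1 p2 m : nat)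
    (P : {poly F}) : Prop :=
  [/\ P.[gamma ^+ s01 p1 p2 m] = 0, P.[gamma ^+ s10 p1 p2 m] = 0,
      P.[gamma ^+ s11 p1 p2 m] = 0 & P.[1] = 1].

Definition good_wrt (F : fieldType) (gamma : F) (p1 p2 m : nat) : Prop :=
  exists P : {poly F}, decoding_poly gamma p1 p2 m P /\ (nmonomials P < 4)%N.

(* m is good: in F_{2^t}, t = ord_m(2), with a primitive m-th root gamma.
   (Any finite field of order 2^t is F_{2^t}.) *)
Definition good (p1 p2 m : nat) : Prop :=
  forall (t : nat), is_ord2 m t ->
  forall (F : finFieldType), #|F| = (2 ^ t)%N ->
  forall gamma : F, m.-primitive_root gamma -> good_wrt gamma p1 p2 m.

Definition inE_set (p1 p2 m : nat) (e : int) : bool :=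
  ~~ ((q1 p1 m)%:Z %| e)%Z && ~~ ((q2 p2 m)%:Z %| e)%Z.

Definition rho (F : fieldType) (z1 z2 : F) : F :=
  (1 + z2^-1) * (1 + z1^-1)^-1.

Definition collision (F : fieldType) (gamma : F) (p1 p2 m : nat) (u v : int)
  : Prop :=
  [/\ inE_set p1 p2 m u, inE_set p1 p2 m v,
      rho (gamma ^ ((s10 p1 p2 m)%:Z * u)) (gamma ^ ((s01 p1 p2 m)%:Z * u))
      = rho (gamma ^ ((s10 p1 p2 m)%:Z * v)) (gamma ^ ((s01 p1 p2 m)%:Z * v))
    & (u != v %[mod (m%:Z)])%Z].

From HB Require Import structures.
From mathcomp Require Import all_boot all_order all_algebra all_field.
From mathcomp Require Import ring zify.
From Stdlib Require Import Classical.
Set Implicit Arguments. Unset Strict Implicit. Unset Printing Implicit Defensive.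
Import Order.TTheory GRing.Theory Num.Theory.
Local Open Scope ring_scope.

(* Write a, b, c, d for the inverses of γ^(s10 u), γ^(s01 u),
   γ^(s10 v), γ^(s01 v).  As p1^ω1 p2^ω2 divides u and v, a and c are
   p1^(β1-ω1)-th and b and d are p2^(β2-ω2)-th roots of unity, i.e. all are
   m1-th roots of unity; u, v ∈ E gives a, b, c ≠ 1; in characteristic 2 the
   collision reads (b - 1)(c - 1) = (d - 1)(a - 1), and then a = c would force
   b = d, hence u ≡ v (mod m2).  Given such a quadruple and a primitive m1-th
   root δ, the Chinese remainder theorem yields exponents F, G with
   δ^(s10 F) = 1/a, δ^(s01 F) = 1/b, δ^(s10 G) = 1/c, δ^(s01 G) = 1/d, and a
   trinomial in 1, X^F, X^G decodes S_m1.  The quadruple lives in F_(2^t), not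
   in F_(2^t1); it is carried over through a root y in F_(2^t1) of the minimal
   polynomial over F_2 of a primitive m1-th root of unity e of F_(2^t): y
   satisfies exactly the F_2-polynomial relations satisfied by e. *)

Lemma nmonomials_le_support (K : fieldType) (p : {poly K}) (s : seq nat) :
  (forall i, p`_i != 0 -> i \in s) -> (nmonomials p <= size s)%N.
Proof.
move=> supp; rewrite /nmonomials -[X in count _ X](mkseq_nth 0) count_map.
rewrite -size_filter; apply: uniq_leq_size => [|i].
  by rewrite filter_uniq ?iota_uniq.
by rewrite mem_filter => /andP[/supp].
Qed.

Lemma nmonomials_trinomial (K : fieldType) (c0 c1 c2 : K) (i j : nat) :
  (nmonomials (c0%:P + c1 *: 'X^i + c2 *: 'X^j) <= 3)%N.
Proof.
apply: (nmonomials_le_support (s := [:: 0; i; j]%N)) => k; apply: contraR.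
rewrite !inE !coefD coefC !coefZ !coefXn => /norP[/negbTE-> /norP[/negbTE-> /negbTE->]].
by rewrite !mulr0 !addr0.
Qed.

Lemma trinomial_decoding (K : fieldType) (x1 x2 a b c d : K) (F G : nat) :
  a * x1 ^+ F = 1 -> b * x2 ^+ F = 1 -> c * x1 ^+ G = 1 -> d * x2 ^+ G = 1 ->
  b != 1 -> c != 1 -> a != c -> (b - 1) * (c - 1) = (d - 1) * (a - 1) ->
  exists2 P : {poly K},
    [/\ P.[x2] = 0, P.[x1] = 0, P.[x1 * x2] = 0 & P.[1] = 1] & (nmonomials P < 4)%N.
Proof.
have inv_eq (y x : K) : y * x = 1 -> y != 0 /\ x = y^-1.
  move=> yx; have y0 : y != 0.
    by apply: contra_eq_neq yx => ->; rewrite mul0r eq_sym oner_eq0.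
  by split=> //; rewrite -[y^-1]mulr1 -yx mulKf.
move=> /inv_eq[a0 x1F] /inv_eq[b0 x2F] /inv_eq[c0 x1G] /inv_eq[d0 x2G] b1 c1 ac rel.
have rel0 : (b - 1) * (c - 1) - (d - 1) * (a - 1) = 0 by rewrite rel subrr.
set N := (c - 1) * (a - c) * (b - 1).
have N0 : N != 0 by rewrite !mulf_neq0 ?subr_eq0.
exists (((a - c) / N)%:P + ((c - 1) * a * b / N) *: 'X^F + ((1 - a) * c * d / N) *: 'X^G);
  last exact: leq_ltn_trans (nmonomials_trinomial _ _ _ _ _) _.
(* The coefficients solve the four linear conditions on P, a system whose
   consistency is exactly the relation between a, b, c, d. *)
rewrite !hornerE !exprMn x1F x2F x1G x2G !expr1n; split.
- by field; rewrite N0 b0 d0.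
- transitivity (((b - 1) * (c - 1) - (d - 1) * (a - 1)) / N); last by rewrite rel0 mul0r.
  by field; rewrite N0 a0 c0.
- by field; rewrite N0 a0 b0 c0 d0.
- transitivity (1 + c * ((b - 1) * (c - 1) - (d - 1) * (a - 1)) / N); last first.
    by rewrite rel0 mulr0 mul0r addr0.
  by rewrite /N; field; rewrite !subr_eq0 b1 c1 ac.
Qed.

Section Chinese.
Variables (q1 q2 : nat).
Hypothesis q12_coprime : coprime q1 q2.

Lemma coprime_chinese1l r : coprime q1 (chinese q1 q2 1 r).
Proof. by rewrite coprime_sym -coprime_modl chinese_modl // coprime_modl coprime1n. Qed.

Lemma coprime_chinese1r r : coprime q2 (chinese q1 q2 r 1).
Proof. by rewrite coprime_sym -coprime_modl chinese_modr // coprime_modl coprime1n. Qed.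

Lemma dvdn_chinese0l r : (q1 %| chinese q1 q2 0 r)%N.
Proof. by rewrite /dvdn chinese_modl // mod0n. Qed.

Lemma dvdn_chinese0r r : (q2 %| chinese q1 q2 r 0)%N.
Proof. by rewrite /dvdn chinese_modr // mod0n. Qed.

Lemma chinese11E : chinese q1 q2 1 1 = (chinese q1 q2 1 0 + chinese q1 q2 0 1)%N.
Proof. by rewrite /chinese !mul0n add0n addn0. Qed.

Lemma chinese10_mulD i j : (q2 %| i)%N -> (q1 %| j)%N ->
  (chinese q1 q2 1 0 * (i + j) = i %[mod q1 * q2])%N.
Proof.
move=> /eqP q2i /eqP q1j; apply/eqP; rewrite chinese_remainder //.
apply/andP; split.
  by rewrite -modnMml chinese_modl // modnMml mul1n -modnDmr q1j addn0.
by rewrite -modnMml chinese_modr // mod0n mul0n mod0n q2i.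
Qed.

Lemma chinese01_mulD i j : (q2 %| i)%N -> (q1 %| j)%N ->
  (chinese q1 q2 0 1 * (i + j) = j %[mod q1 * q2])%N.
Proof.
move=> /eqP q2i /eqP q1j; apply/eqP; rewrite chinese_remainder //; apply/andP; split.
  by rewrite -modnMml chinese_modl // mod0n mul0n mod0n q1j.
by rewrite -modnMml chinese_modr // modnMml mul1n -modnDml q2i add0n.
Qed.

Lemma chinese_exponent (K : fieldType) (delta a b : K) :
  (q1 * q2).-primitive_root delta -> a ^+ q1 = 1 -> b ^+ q2 = 1 ->
  exists F,
    (delta ^+ chinese q1 q2 1 0) ^+ F = a /\ (delta ^+ chinese q1 q2 0 1) ^+ F = b.
Proof.
move=> prim aq1 bq2.
have /andP[q1_gt0 q2_gt0] : (0 < q1)%N && (0 < q2)%N.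
  by rewrite -muln_gt0 (prim_order_gt0 prim).
have [[i _] /= a_def] := prim_rootP prim (expr_dvd aq1 (dvdn_mulr _ (dvdnn _))).
have [[j _] /= b_def] := prim_rootP prim (expr_dvd bq2 (dvdn_mull _ (dvdnn _))).
have q2i : (q2 %| i)%N.
  by rewrite -(dvdn_pmul2l q1_gt0) [(q1 * i)%N]mulnC (prim_order_dvd prim) exprM -a_def aq1.
have q1j : (q1 %| j)%N.
  by rewrite -(dvdn_pmul2r q2_gt0) (prim_order_dvd prim) exprM -b_def bq2.
exists (i + j)%N; rewrite a_def b_def -!exprM.
by split; apply/eqP; rewrite (eq_prim_root_expr prim) ?chinese10_mulD ?chinese01_mulD.
Qed.

End Chinese.

(* The last conjunct is the collision equation (1 + b)(1 + c) = (1 + d)(1 + a)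
   in the form the decoding argument needs in any characteristic; the two forms
   agree in characteristic 2. *)
Definition rho_config (R : pzRingType) (q1 q2 : nat) (a b c d : R) : bool :=
  [&& a ^+ q1 == 1, c ^+ q1 == 1, b ^+ q2 == 1, d ^+ q2 == 1,
      b != 1, c != 1, a != c & (b - 1) * (c - 1) == (d - 1) * (a - 1)].

Lemma decoding_trinomial_of_rho_config (K : fieldType) (q1 q2 : nat) (delta a b c d : K) :
  coprime q1 q2 -> (q1 * q2).-primitive_root delta -> rho_config q1 q2 a b c d ->
  exists2 P : {poly K},
    [/\ P.[delta ^+ chinese q1 q2 0 1] = 0, P.[delta ^+ chinese q1 q2 1 0] = 0,
        P.[delta ^+ chinese q1 q2 1 1] = 0 & P.[1] = 1] & (nmonomials P < 4)%N.
Proof.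
move=> co prim /and5P[/eqP aq1 /eqP cq1 /eqP bq2 /eqP dq2 /and4P[b1 c1 ac /eqP rel]].
have /andP[q1_gt0 q2_gt0] : (0 < q1)%N && (0 < q2)%N.
  by rewrite -muln_gt0 (prim_order_gt0 prim).
have inv_root (x : K) q : (0 < q)%N -> x ^+ q = 1 -> x != 0 /\ x^-1 ^+ q = 1.
  move=> q_gt0 xq; rewrite exprVn xq invr1; split=> //.
  by apply: contra_eq_neq xq => ->; rewrite expr0n gtn_eqF // eq_sym oner_eq0.
have [a0 aq1'] := inv_root a _ q1_gt0 aq1; have [c0 cq1'] := inv_root c _ q1_gt0 cq1.
have [b0 bq2'] := inv_root b _ q2_gt0 bq2; have [d0 dq2'] := inv_root d _ q2_gt0 dq2.
have [F [x1F x2F]] := chinese_exponent co prim aq1' bq2'.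
have [G [x1G x2G]] := chinese_exponent co prim cq1' dq2'.
rewrite chinese11E exprD.
apply: (trinomial_decoding (F := F) (G := G)) rel => //.
all: by rewrite ?x1F ?x2F ?x1G ?x2G mulfV.
Qed.

Lemma ex_minimal (T : Type) (mu : T -> nat) (P : T -> Prop) :
  (exists x, P x) -> exists2 x, P x & forall y, P y -> (mu x <= mu y)%N.
Proof.
move=> [x0 Px0]; have [n] : exists n, exists2 x, P x & mu x = n by exists (mu x0), x0.
elim/ltn_ind: n => n IH [x Px mux].
have [[y Py lt_yx] | x_min] := classic (exists2 y, P y & (mu y < mu x)%N).
  by apply: (IH (mu y)); [rewrite -mux | exists y].
by exists x => // y Py; rewrite leqNgt; apply/negP => lt_yx; apply: x_min; exists y.
Qed.

Section MinimalPolynomial.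
Variables (k K : fieldType) (f : {rmorphism k -> K}) (e : K) (g : {poly k}).
Hypotheses (g_neq0 : g != 0) (g_root : root (map_poly f g) e).
Hypothesis g_min : forall p, p != 0 -> root (map_poly f p) e -> (size g <= size p)%N.

Lemma min_root_dvdp p : root (map_poly f p) e -> g %| p.
Proof.
move=> p_root; apply/modp_eq0P/eqP; apply: contraT => mod_neq0.
have := ltn_modpN0 p g_neq0; rewrite ltnNge g_min //.
move: p_root; rewrite /root {1}(divp_eq p g) rmorphD rmorphM !hornerE.
by rewrite (eqP g_root) mulr0 add0r.
Qed.

Lemma min_root_size_gt1 : (1 < size g)%N.
Proof.
rewrite ltnNge; apply: contraNN g_neq0 => /size1_polyC g_def.
by move: g_root; rewrite g_def map_polyC rootC fmorph_eq0 polyC_eq0.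
Qed.
End MinimalPolynomial.

Lemma exists_root_transfer (k K K' : fieldType) (f : {rmorphism k -> K})
    (f' : {rmorphism k -> K'}) (e : K) (delta : K') (n : nat) :
  e ^+ n = 1 -> n.-primitive_root delta ->
  exists y : K', forall p : {poly k}, root (map_poly f p) e -> root (map_poly f' p) y.
Proof.
move=> en prim.
have Xn1 (R : fieldType) (h : {rmorphism k -> R}) : map_poly h ('X^n - 1) = 'X^n - 1.
  by rewrite rmorphB rmorph1; congr (_ - _); exact: map_polyXn.
have Xn1_root : root (map_poly f ('X^n - 1)) e by rewrite Xn1 /root !hornerE en subrr.
have [|g [g_neq0 g_root] g_min] :=
  ex_minimal (fun p : {poly k} => size p) (P := fun p => p != 0 /\ root (map_poly f p) e).
  by exists ('X^n - 1); split=> //; exact: monic_neq0 (monicXnsubC 1 (prim_order_gt0 prim)).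
have g_dvd := min_root_dvdp g_neq0 g_root
  (fun p p_neq0 p_root => g_min p (conj p_neq0 p_root)).
have /dvdp_prod_XsubC[s g_eqp] :
    map_poly f' g %| \prod_(0 <= i < n) ('X - (delta ^+ i)%:P).
  by rewrite factor_Xn_sub_1 // -(Xn1 _ f') dvdp_map (g_dvd _ Xn1_root).
have := min_root_size_gt1 g_neq0 g_root; rewrite -(size_map_poly f') (eqp_size g_eqp).
case: (mask s _) g_eqp => [|i r] g_eqp; first by rewrite big_nil size_poly1.
exists (delta ^+ i) => p /g_dvd/dvdpP[q ->].
by rewrite rmorphM rootM (eqp_root g_eqp) big_cons rootM root_XsubC eqxx !orbT.
Qed.

Lemma rmorph_kernel_eq (R : pzRingType) (K : finFieldType) (K' : fieldType)
    (phi : {rmorphism R -> K}) (psi : {rmorphism R -> K'}) :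
  (forall r, phi r == 0 -> psi r == 0) -> forall r, (phi r == 0) = (psi r == 0).
Proof.
move=> ker r; apply/idP/idP => [/ker // | /eqP psi_r0]; apply: contraT => phi_r.
have [N phi_N] : exists N, phi (r ^+ N.+1) = 1.
  move: (finNzRing_gt1 K) (expf_card (phi r)); case: #|K| => [|[|N]] // _ phi_card.
  by exists N; rewrite rmorphXn; apply: (mulIf phi_r); rewrite mul1r -exprSr.
have := ker (r ^+ N.+1 - 1); rewrite !rmorphB !rmorph1 phi_N subrr eqxx => /(_ isT).
by rewrite rmorphXn psi_r0 expr0n sub0r oppr_eq0 oner_eq0.
Qed.

Lemma rho_config_rmorph (R : pzRingType) (K K' : nzRingType)
    (phi : {rmorphism R -> K}) (psi : {rmorphism R -> K'}) (q1 q2 : nat) (a b c d : R) :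
  (forall r, (phi r == 0) = (psi r == 0)) ->
  rho_config q1 q2 (phi a) (phi b) (phi c) (phi d) =
  rho_config q1 q2 (psi a) (psi b) (psi c) (psi d).
Proof.
move=> ker; have eqE r s : (phi r == phi s) = (psi r == psi s).
  by rewrite -subr_eq0 -rmorphB ker rmorphB subr_eq0.
by rewrite /rho_config -(rmorph1 phi) -(rmorph1 psi) -!rmorphXn -!rmorphB -!rmorphM !eqE.
Qed.

Lemma rho_config_transfer (k : fieldType) (K : finFieldType) (K' : fieldType)
    (f : {rmorphism k -> K}) (f' : {rmorphism k -> K'}) (q1 q2 : nat)
    (e : K) (delta : K') (a b c d : K) :
  (q1 * q2).-primitive_root e -> (q1 * q2).-primitive_root delta ->
  rho_config q1 q2 a b c d -> exists a' b' c' d' : K', rho_config q1 q2 a' b' c' d'.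
Proof.
move=> e_prim delta_prim abcd.
have [y y_root] := exists_root_transfer f f' (prim_expr_order e_prim) delta_prim.
pose phi : {rmorphism {poly k} -> K} := horner_eval e \o map_poly f.
pose psi : {rmorphism {poly k} -> K'} := horner_eval y \o map_poly f'.
have ker := rmorph_kernel_eq (phi := phi) (psi := psi) y_root.
have phiX i : phi 'X^i = e ^+ i by rewrite /= map_polyXn horner_evalE hornerXn.
have psiX i : psi 'X^i = y ^+ i by rewrite /= map_polyXn horner_evalE hornerXn.
have root_e (x : K) (q : nat) : x ^+ q == 1 -> (q %| q1 * q2)%N -> exists i, x = phi 'X^i.
  by move=> /eqP xq /(expr_dvd xq)/(prim_rootP e_prim)[i ->]; exists i; rewrite phiX.
case/and5P: (abcd) => aq1 cq1 bq2 dq2 _.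
have [i a_def] := root_e a _ aq1 (dvdn_mulr _ (dvdnn _)).
have [j b_def] := root_e b _ bq2 (dvdn_mull _ (dvdnn _)).
have [l c_def] := root_e c _ cq1 (dvdn_mulr _ (dvdnn _)).
have [o d_def] := root_e d _ dq2 (dvdn_mull _ (dvdnn _)).
exists (y ^+ i), (y ^+ j), (y ^+ l), (y ^+ o).
by rewrite -!psiX -(rho_config_rmorph _ _ _ _ _ _ ker) -a_def -b_def -c_def -d_def.
Qed.

Lemma prim_expz_eq1 (R : unitRingType) (z : R) (n : nat) (k : int) :
  n.-primitive_root z -> (z ^ k == 1) = (n%:Z %| k)%Z.
Proof.
move=> prim; case: k => k; first by rewrite dvdzE /= -(prim_order_dvd prim).
by rewrite dvdzE /= (prim_order_dvd prim) -[z ^ Negz k]/((z ^+ k.+1)^-1) invr_eq1.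
Qed.

Lemma prim_expz_eq (F : fieldType) (z : F) (n : nat) (k l : int) :
  n.-primitive_root z -> (z ^ k == z ^ l) = (k == l %[mod n])%Z.
Proof.
move=> prim; have z0 : z != 0 by rewrite (prim_root_eq0 prim) -lt0n (prim_order_gt0 prim).
rewrite eqz_mod_dvd -(prim_expz_eq1 _ prim) expfzDr // -invr_expz.
have zl0 := expfz_neq0 l z0.
by rewrite -[RHS](inj_eq (mulIf zl0)) divfK // mul1r.
Qed.

Lemma rho_eq_pchar2 (F : fieldType) (x1 y1 x2 y2 : F) :
  2%N \in [pchar F] -> x1 != 1 -> x2 != 1 -> rho x1 y1 = rho x2 y2 ->
  (y1^-1 - 1) * (x2^-1 - 1) = (y2^-1 - 1) * (x1^-1 - 1).
Proof.
move=> charF x1_neq1 x2_neq1; rewrite /rho !(GRing.subr_pchar2 charF).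
have neq0 (x : F) : x != 1 -> 1 + x^-1 != 0.
  by rewrite addrC -(GRing.subr_pchar2 charF) subr_eq0 invr_eq1.
by move/eqP; rewrite eqr_div ?neq0 // !(addrC 1) => /eqP.
Qed.

Section Collision.
Variables (F : fieldType) (q1 q2 : nat) (gamma : F).
Hypotheses (q12_coprime : coprime q1 q2) (gamma_prim : (q1 * q2).-primitive_root gamma).

Local Notation X u := (gamma ^ ((chinese q1 q2 1 0)%:Z * u)).
Local Notation Y u := (gamma ^ ((chinese q1 q2 0 1)%:Z * u)).

Let dvdz_q12 (k : int) : ((q1 * q2)%N%:Z %| k)%Z = (q1%:Z %| k)%Z && (q2%:Z %| k)%Z.
Proof. by rewrite PoszM Gauss_dvdz ?coprimezE. Qed.

Lemma X_neq1 u : ~~ (q1%:Z %| u)%Z -> X u != 1.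
Proof.
move=> q1u; rewrite (prim_expz_eq1 _ gamma_prim) dvdz_q12.
by rewrite Gauss_dvdzr ?coprimezE ?coprime_chinese1l // (negbTE q1u).
Qed.

Lemma Y_neq1 u : ~~ (q2%:Z %| u)%Z -> Y u != 1.
Proof.
move=> q2u; rewrite (prim_expz_eq1 _ gamma_prim) dvdz_q12 andbC.
by rewrite Gauss_dvdzr ?coprimezE ?coprime_chinese1r // (negbTE q2u).
Qed.

Lemma X_inv_expr u r : (q1%:Z %| r%:Z * u)%Z -> (X u)^-1 ^+ r = 1.
Proof.
move=> q1ru; apply/eqP; rewrite exprVn invr_eq1 -[_ ^+ r]/(_ ^ r%:Z) exprz_exp.
rewrite (prim_expz_eq1 _ gamma_prim) dvdz_q12 mulrAC -mulrA dvdz_mull //=.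
by apply: dvdz_mulr; rewrite dvdzE /= dvdn_chinese0r.
Qed.

Lemma Y_inv_expr u r : (q2%:Z %| r%:Z * u)%Z -> (Y u)^-1 ^+ r = 1.
Proof.
move=> q2ru; apply/eqP; rewrite exprVn invr_eq1 -[_ ^+ r]/(_ ^ r%:Z) exprz_exp.
rewrite (prim_expz_eq1 _ gamma_prim) dvdz_q12 andbC mulrAC -mulrA dvdz_mull //=.
by apply: dvdz_mulr; rewrite dvdzE /= dvdn_chinese0l.
Qed.

Lemma XY_eq u v : X u = X v -> Y u = Y v -> (u == v %[mod (q1 * q2)%N])%Z.
Proof.
move=> /eqP + /eqP; rewrite !(prim_expz_eq _ _ gamma_prim) !eqz_mod_dvd -!mulrBr.
move=> Xuv Yuv; have := rpredD Xuv Yuv.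
rewrite -mulrDl -PoszD -chinese11E // Gauss_dvdzr //.
by rewrite coprimezE /= coprimeMl coprime_chinese1l ?coprime_chinese1r.
Qed.

Lemma collision_rho_config u v r1 r2 : 2%N \in [pchar F] ->
  ~~ (q1%:Z %| u)%Z -> ~~ (q2%:Z %| u)%Z -> ~~ (q1%:Z %| v)%Z ->
  (q1%:Z %| r1%:Z * u)%Z -> (q2%:Z %| r2%:Z * u)%Z ->
  (q1%:Z %| r1%:Z * v)%Z -> (q2%:Z %| r2%:Z * v)%Z ->
  rho (X u) (Y u) = rho (X v) (Y v) -> (u != v %[mod (q1 * q2)%N])%Z ->
  rho_config r1 r2 (X u)^-1 (Y u)^-1 (X v)^-1 (Y v)^-1.
Proof.
move=> charF q1u q2u q1v q1ru q2ru q1rv q2rv rho_uv uv.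
have rel := rho_eq_pchar2 charF (X_neq1 q1u) (X_neq1 q1v) rho_uv.
rewrite /rho_config !X_inv_expr ?Y_inv_expr // !eqxx /= !invr_eq1 Y_neq1 ?X_neq1 //=.
rewrite (inj_eq invr_inj) rel eqxx andbT.
apply: contra uv => /eqP Xuv; apply: (XY_eq Xuv); apply/invr_inj/(addIr (-1)).
apply: (@mulIf _ ((X v)^-1 - 1)); first by rewrite subr_eq0 invr_eq1 X_neq1.
by rewrite rel Xuv.
Qed.

End Collision.

Lemma ltn_expn_of_ndvdz (p b i P : nat) (s : int) :
  ~~ ((p ^ b)%:Z %| P%:Z * s)%Z -> (p ^ i %| P)%N -> (i < b)%N.
Proof.
move=> ndvd piP; rewrite ltnNge; apply: contra ndvd => le_bi.
by apply: dvdz_mulr; rewrite dvdzE /= (dvdn_trans (dvdn_exp2l p le_bi)).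
Qed.

Lemma dvdz_expn_subn (p b w i P : nat) (s : int) : (w <= i)%N -> (p ^ i %| P)%N ->
  ((p ^ b)%:Z %| (p ^ (b - w))%:Z * (P%:Z * s))%Z.
Proof.
move=> le_wi piP; rewrite mulrA -PoszM dvdz_mulr // dvdzE /=.
by rewrite (dvdn_trans _ (dvdn_mul (dvdnn _) piP)) // -expnD dvdn_exp2l //; lia.
Qed.

Lemma divn_expn_mul (p1 p2 b1 b2 w1 w2 : nat) : (0 < p1)%N -> (0 < p2)%N ->
  (w1 <= b1)%N -> (w2 <= b2)%N ->
  ((p1 ^ b1 * p2 ^ b2) %/ (p1 ^ w1 * p2 ^ w2) = p1 ^ (b1 - w1) * p2 ^ (b2 - w2))%N.
Proof.
move=> p1_gt0 p2_gt0 le_wb1 le_wb2.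
rewrite -{1}(subnK le_wb1) -{1}(subnK le_wb2) !expnD mulnACA mulnK //.
by rewrite muln_gt0 !expn_gt0 p1_gt0 p2_gt0.
Qed.

Section PrimePowers.
Variables (p1 p2 : nat).
Hypotheses (p1_prime : prime p1) (p2_prime : prime p2) (p1_neq_p2 : p1 != p2).

Lemma coprime_expn_primes c1 c2 : coprime (p1 ^ c1) (p2 ^ c2).
Proof. by rewrite coprimeXl // coprimeXr // prime_coprime // dvdn_prime2. Qed.

Lemma q1_expn_mul c1 c2 : q1 p1 (p1 ^ c1 * p2 ^ c2) = (p1 ^ c1)%N.
Proof.
rewrite /q1 lognM ?expn_gt0 ?prime_gt0 // !lognX !logn_prime // eqxx.
by rewrite (negbTE p1_neq_p2) muln0 muln1 addn0.
Qed.

Lemma q2_expn_mul c1 c2 : q2 p2 (p1 ^ c1 * p2 ^ c2) = (p2 ^ c2)%N.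
Proof.
rewrite /q2 lognM ?expn_gt0 ?prime_gt0 // !lognX !logn_prime // eqxx.
by rewrite eq_sym (negbTE p1_neq_p2) muln0 muln1.
Qed.

Lemma good_wrt_rho_config (K : fieldType) (delta a b c d : K) c1 c2 :
  (p1 ^ c1 * p2 ^ c2)%N.-primitive_root delta -> rho_config (p1 ^ c1) (p2 ^ c2) a b c d ->
  good_wrt delta p1 p2 (p1 ^ c1 * p2 ^ c2).
Proof.
move=> prim abcd; rewrite /good_wrt /decoding_poly /s01 /s10 /s11 /s_sig.
rewrite q1_expn_mul q2_expn_mul.
have [P P_dec P_small] :=
  decoding_trinomial_of_rho_config (coprime_expn_primes c1 c2) prim abcd.
by exists P.
Qed.

End PrimePowers.

Definition F2_rmorph (K : fieldType) (charK : 2%N \in [pchar K]) : {rmorphism 'F_2 -> K} :=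
  (in_alg (pPrimeCharType charK) : {rmorphism 'F_2 -> pPrimeCharType charK}).

Theorem theorem4 (p1 p2 b1 b2 t : nat) (F : finFieldType) (gamma : F)
  (i1 i2 j1 j2 : nat) (sig1 sig2 : int) :
  prime p1 -> prime p2 -> (2 < p1)%N -> (2 < p2)%N -> p1 != p2 ->
  (0 < b1)%N -> (0 < b2)%N ->
  is_ord2 (p1 ^ b1 * p2 ^ b2)%N t ->
  #|F| = (2 ^ t)%N ->
  (p1 ^ b1 * p2 ^ b2)%N.-primitive_root gamma ->
  good_wrt gamma p1 p2 (p1 ^ b1 * p2 ^ b2)%N ->
  coprimez sig1 (p1 ^ b1 * p2 ^ b2)%N ->
  coprimez sig2 (p1 ^ b1 * p2 ^ b2)%N ->
  collision gamma p1 p2 (p1 ^ b1 * p2 ^ b2)%N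
    ((p1 ^ i1 * p2 ^ i2)%N%:Z * sig1) ((p1 ^ j1 * p2 ^ j2)%N%:Z * sig2) ->
  good p1 p2 ((p1 ^ b1 * p2 ^ b2) %/ (p1 ^ minn i1 j1 * p2 ^ minn i2 j2))%N.
Proof.
move=> p1_prime p2_prime _ _ p1_neq_p2 _ _ _ cardF gamma_prim _ _ _.
have charF : 2%N \in [pchar F] := card_finPcharP cardF isT.
rewrite /collision /inE_set /s10 /s01 /s_sig !q1_expn_mul ?q2_expn_mul //.
case=> /andP[q1u q2u] /andP[q1v _] rho_uv uv.
have lt_w1 := leq_ltn_trans (geq_minl i1 j1) (ltn_expn_of_ndvdz q1u (dvdn_mulr _ (dvdnn _))).
have lt_w2 := leq_ltn_trans (geq_minl i2 j2) (ltn_expn_of_ndvdz q2u (dvdn_mull _ (dvdnn _))).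
have abcd := collision_rho_config (coprime_expn_primes p1_prime p2_prime p1_neq_p2 b1 b2)
  gamma_prim (r1 := p1 ^ (b1 - minn i1 j1)) (r2 := p2 ^ (b2 - minn i2 j2)) charF q1u q2u q1v
  (dvdz_expn_subn _ _ (geq_minl _ _) (dvdn_mulr _ (dvdnn _)))
  (dvdz_expn_subn _ _ (geq_minl _ _) (dvdn_mull _ (dvdnn _)))
  (dvdz_expn_subn _ _ (geq_minr _ _) (dvdn_mulr _ (dvdnn _)))
  (dvdz_expn_subn _ _ (geq_minr _ _) (dvdn_mull _ (dvdnn _))) rho_uv uv.
rewrite (divn_expn_mul (prime_gt0 p1_prime) (prime_gt0 p2_prime) (ltnW lt_w1) (ltnW lt_w2)).
have e_prim := dvdn_prim_root gamma_prim
  (dvdn_mul (dvdn_exp2l p1 (leq_subr (minn i1 j1) b1)) (dvdn_exp2l p2 (leq_subr (minn i2 j2) b2))).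
move=> t' _ K cardK delta delta_prim.
have charK : 2%N \in [pchar K] := card_finPcharP cardK isT.
have [a [b [c [d abcd']]]] :=
  rho_config_transfer (F2_rmorph charF) (F2_rmorph charK) e_prim delta_prim abcd.
exact: good_wrt_rho_config abcd'.
Qed.
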